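(* For every integer $k\ge 1$, $$\sum_{n=k}^\infty \frac{B_{n,k}}{4^n}=1,\qquad \sum_{n=k}^\infty B_{n,k}\frac{(-1)^n}{4^n}=(2\sqrt2-3)^k,$$ $$\sum_{n=k}^\infty \frac{A_{n,k+1}}{4^n}=2,\qquad \sum_{n=k}^\infty A_{n,k+1}\frac{(-1)^n}{4^n}=2(\sqrt2-1)(2\sqrt2-3)^k,$$ and moreover $$\sum_{k\ge1}\sum_{n\ge k} \frac{B_{n,k}}{4^{n+k}}=\frac13,\qquad \sum_{k\ge1}\sum_{n\ge k} B_{n,k}\frac{(-1)^n}{4^{n+k}}=\frac{8\sqrt2-13}{41},$$ $$\sum_{k\ge0}\sum_{n\ge k} \frac{A_{n,k+1}}{4^{n+k}}=\frac83,\qquad \sum_{k\ge0}\sum_{n\ge k} A_{n,k+1}\frac{(-1)^n}{4^{n+k}}=\frac{8}{41}(5\sqrt2-3).$$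
   Context: The Catalan triangle numbers are $B_{n,k}=\frac{k}{n}\binom{2n}{n-k}$ for integers $n\ge1$, $1\le k\le n$, and $A_{n,k}=\frac{2k-1}{2n+1}\binom{2n+1}{n+1-k}$ for integers $n\ge 0$, $1\le k\le n+1$. *)

From HB Require Import structures.
From mathcomp Require Import all_boot all_order all_algebra.
From mathcomp Require Import all_classical all_reals topology normedtype sequences.
Set Implicit Arguments. Unset Strict Implicit. Unset Printing Implicit Defensive.
Import Order.TTheory GRing.Theory Num.Theory numFieldTopology.Exports numFieldNormedType.Exports.
Local Open Scope ring_scope.

(* Catalan triangle B_{n,k} = k/n * C(2n, n-k)   (used for 1 <= k <= n) *)
Definition catalanB (R : realType) (n k : nat) : R :=
  (k%:R / n%:R) * ('C(2 * n, n - k))%:R.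

(* Catalan triangle A_{n,k} = (2k-1)/(2n+1) * C(2n+1, n+1-k)  (used for 1 <= k <= n+1) *)
Definition catalanA (R : realType) (n k : nat) : R :=
  ((2 * k - 1)%:R / (2 * n + 1)%:R) * ('C(2 * n + 1, n.+1 - k))%:R.

Definition psum (R : realType) (m : nat) (u : nat -> R) (N : nat) : R :=
  \sum_(m <= n < N) u n.

Definition tsum (R : realType) (m : nat) (u : nat -> R) : R :=
  lim (psum m u @ \oo)%classic.

Arguments catalanB R n k : clear implicits.
Arguments catalanA R n k : clear implicits.

From HB Require Import structures.
From mathcomp Require Import all_boot all_order all_algebra.
From mathcomp Require Import all_classical all_reals topology normedtype sequences.
From mathcomp Require Import ring lra zify.
Import Order.TTheory GRing.Theory Num.Theory numFieldTopology.Exports numFieldNormedType.Exports.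
Local Open Scope classical_set_scope.
Local Open Scope ring_scope.

(* Write B_{n,k} as the ballot number b(n,k) = C(2n-1, n+k-1) - C(2n-1, n+k) and set
   b(n,0) = [n = 0].  Then A_{n,k+1} = b(n,k) + b(n,k+1), and Pascal's rule applied twice
   gives b(n+1,k+1) = b(n,k) + 2 b(n,k+1) + b(n,k+2), so the generating functions
   P_k(x) = sum_n b(n,k) x^n satisfy P_{k+2} = P_{k+1}/x - P_k - 2 P_{k+1}.
   At x = 1/4 this says that P_k is affine in k.  Since P_0 = 1, P_1 <= 1 (its partial
   sums telescope along C(2n,n)/4^n) and every P_k is a sum of nonnegative terms,
   the only possibility is P_k = 1 for all k.
   At x = -1/4 the series converge absolutely, |P_k| <= 1, and P_{k+2} = -6 P_{k+1} - P_k.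
   The characteristic roots are 2 sqrt 2 - 3 and -3 - 2 sqrt 2; the second one has
   modulus > 1 and is excluded by boundedness, so P_k = (2 sqrt 2 - 3)^k.
   The double sums are then geometric series in k. *)

Lemma bin_odd_mid n : 'C((2 * n).+1, n) = 'C((2 * n).+1, n.+1).
Proof. by rewrite -[in RHS]bin_sub; [congr 'C(_, _); lia | lia]. Qed.

Lemma central_binS n : 'C(2 * n.+1, n.+1) = (2 * ('C(2 * n, n) + 'C(2 * n, n.+1)))%N.
Proof. by rewrite mulnS add2n binS bin_odd_mid binS; lia. Qed.

Lemma natr_binB (R : numFieldType) m j :
  'C(m, j)%:R - 'C(m, j.+1)%:R =
  (j.+1%:R - (m - j)%:R) / m.+1%:R * 'C(m.+1, j.+1)%:R :> R.
Proof.
apply: (mulfI (_ : m.+1%:R != 0 :> R)); first by rewrite pnatr_eq0.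
rewrite mulrA mulrCA divff ?pnatr_eq0 // mulr1 mulrBr mulrBl -!natrM.
by rewrite (mul_bin_diag m.+1) (mul_bin_down m.+1) subSS.
Qed.

Section Ballot.
Variable R : comPzRingType.

Lemma natr_binS m j : 'C(m.+1, j.+1)%:R = 'C(m, j.+1)%:R + 'C(m, j)%:R :> R.
Proof. by rewrite binS natrD. Qed.

Lemma natr_binSS m j :
  'C(m.+2, j.+2)%:R = 'C(m, j)%:R + 2 * 'C(m, j.+1)%:R + 'C(m, j.+2)%:R :> R.
Proof. by rewrite !natr_binS; ring. Qed.

Definition ballot (n k : nat) : R :=
  if n is n'.+1 then 'C((2 * n').+1, n' + k)%:R - 'C((2 * n').+1, (n' + k).+1)%:R
  else (k == 0%N)%:R.

Lemma ballot_recS n k :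
  ballot n.+1 k.+1 = ballot n k + 2 * ballot n k.+1 + ballot n k.+2.
Proof.
case: n => [|n].
  by case: k => [|[|k]]; rewrite /ballot muln0 !add0n ?bin1 !bin_small //=; ring.
rewrite /ballot mulnS add2n !addSn !addnS !natr_binSS; ring.
Qed.

Lemma ballot_n0 n : ballot n 0 = (n == 0%N)%:R.
Proof. by case: n => [|n] //; rewrite /ballot addn0 bin_odd_mid subrr. Qed.

Lemma ballot_small n k : (n < k)%N -> ballot n k = 0.
Proof.
case: n => [|n] ltnk; first by case: k ltnk.
by rewrite /ballot !bin_small ?subrr //; lia.
Qed.

Lemma ballot_addS n k :
  ballot n k + ballot n k.+1 = 'C(2 * n, n + k)%:R - 'C(2 * n, (n + k).+1)%:R.
Proof.
case: n => [|n]; first by rewrite /ballot muln0 !add0n !bin0n subr0 addr0.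
by rewrite /ballot mulnS add2n !addSn addnS !(natr_binS (2 * n).+1); ring.
Qed.

End Ballot.

Section Catalan.
Variable R : realType.

Lemma catalanB_ballot n k : (1 <= k <= n)%N -> catalanB R n k = ballot R n k.
Proof.
case: n => [|n] /andP[k_gt0 k_le]; first lia.
rewrite /catalanB /ballot natr_binB mulnS add2n.
rewrite -(@bin_sub _ (n + k).+1); last lia.
rewrite (_ : (2 * n).+2 - (n + k).+1 = n.+1 - k)%N; last lia.
rewrite (_ : (2 * n).+1 - (n + k) = n.+1 - k)%N; last lia.
congr (_ * _); rewrite natrB // -addSn natrD (_ : (2 * n).+2 = 2 * n.+1)%N; last lia.
by rewrite natrM; field; rewrite nat1r pnatr_eq0.
Qed.

Lemma catalanA_ballot n k : (k <= n)%N ->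
  catalanA R n k.+1 = ballot R n k + ballot R n k.+1.
Proof.
move=> k_le; rewrite ballot_addS natr_binB /catalanA addn1 subSS.
rewrite -(@bin_sub _ (n + k).+1); last lia.
rewrite (_ : (2 * n).+1 - (n + k).+1 = n - k)%N; last lia.
rewrite (_ : 2 * n - (n + k) = n - k)%N; last lia.
by rewrite (_ : 2 * k.+1 - 1 = (n + k).+1 - (n - k))%N ?natrB //; lia.
Qed.

Lemma ballot_ge0 n k : 0 <= ballot R n k.
Proof.
case: k => [|k]; first by rewrite ballot_n0.
have [/ballot_small -> // | le_kn] := ltnP n k.+1.
by rewrite -catalanB_ballot ?le_kn // /catalanB mulr_ge0 ?divr_ge0.
Qed.

End Catalan.

Lemma bounded_multiples_le0 (R : archiRealFieldType) (d : R) :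
  (forall k : nat, k%:R * d <= 1) -> d <= 0.
Proof.
move=> le1; rewrite leNgt; apply/negP => d_gt0.
have := le1 (Num.bound d^-1); rewrite -ler_pdivlMr // div1r => le_bound.
have d_inv_ge0 : 0 <= d^-1 by rewrite invr_ge0 ltW.
by have := archi_boundP d_inv_ge0; rewrite ltNge le_bound.
Qed.

Lemma bounded_linrec_geometric {R : realType} {L : R ^nat} {u v M : R} :
  1 < `|v| -> (forall k, `|L k| <= M) ->
  (forall k, L k.+2 = (u + v) * L k.+1 - u * v * L k) ->
  forall k, L k = L 0%N * u ^+ k.
Proof.
move=> v_gt1 L_le rec.
pose D k := L k.+1 - u * L k.
have DE k : D k = v ^+ k * D 0%N.
  elim: k => [|k IH]; first by rewrite mul1r.
  by rewrite exprS -mulrA -IH /D rec; ring.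
have D_le k : `|D k| <= (1 + `|u|) * M.
  rewrite mulrDl mul1r (le_trans (ler_normB _ _)) // normrM.
  by rewrite lerD ?ler_wpM2l.
have D0 : D 0%N = 0.
  apply/normr0_eq0/eqP; rewrite eq_le normr_ge0 andbT.
  have w_lt1 : `| `|v|^-1 | < 1.
    by rewrite ger0_norm ?invr_ge0 // invf_lt1 // (lt_trans ltr01).
  apply: (ler_cvg_to (cvg_cst _) (cvg_geometric ((1 + `|u|) * M) w_lt1)).
  apply: nearW => k /=; rewrite exprVn ler_pdivlMr ?exprn_gt0 ?(lt_trans ltr01) //.
  by rewrite mulrC -normrX -normrM -DE.
elim=> [|k IH]; first by rewrite mulr1.
by have /eqP := DE k; rewrite D0 mulr0 subr_eq0 => /eqP ->; rewrite IH exprS; ring.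
Qed.

Section GeneratingFunction.
Variable R : realType.

Definition ballot_gf (k : nat) (x : R) : R ^nat :=
  series (fun n => ballot R n k * x ^+ n).

Lemma ballot_gfS k (x : R) N : ballot_gf k.+1 x N.+1 =
  x * (ballot_gf k x N + 2 * ballot_gf k.+1 x N + ballot_gf k.+2 x N).
Proof.
rewrite /ballot_gf /series /= big_nat_recl // ballot_small // mul0r add0r.
rewrite mulr_sumr -!big_split mulr_sumr; apply: eq_bigr => n _.
by rewrite ballot_recS exprS /=; ring.
Qed.

Lemma cvg_ballot_gfSS {k : nat} {x a b : R} : x != 0 ->
  ballot_gf k x @ \oo --> a -> ballot_gf k.+1 x @ \oo --> b ->
  ballot_gf k.+2 x @ \oo --> b / x - a - 2 * b.
Proof.
move=> x_neq0 gf_a gf_b.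
have -> : ballot_gf k.+2 x =
    (fun N => ballot_gf k.+1 x N.+1 / x - ballot_gf k x N - 2 * ballot_gf k.+1 x N).
  by apply/funext => N; rewrite ballot_gfS; field.
apply: cvgB; last exact: cvgMl_tmp.
by apply: cvgB => //; apply: cvgMr_tmp; rewrite cvg_shiftS.
Qed.

Lemma cvg_ballot_gf0 (x : R) : ballot_gf 0 x @ \oo --> (1 : R).
Proof.
rewrite -cvg_shiftS; apply: cvg_near_cst; apply: nearW => N /=.
rewrite /ballot_gf /series /= big_nat_recl // ballot_n0 mulr1 big1 ?addr0 // => n _.
by rewrite ballot_n0 mul0r.
Qed.

Lemma normed_ballot_gf k (x : R) :
  [normed series (fun n => ballot R n k * x ^+ n)] = ballot_gf k `|x|.
Proof.
apply/funext => N; apply: eq_bigr => n _ /=.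
by rewrite normrM normrX ger0_norm ?ballot_ge0.
Qed.

Definition central_quarter (n : nat) : R := 'C(2 * n, n)%:R * 4^-1 ^+ n.

Lemma ballot1_quarter n :
  ballot R n.+1 1 * 4^-1 ^+ n.+1 = 2 * (central_quarter n.+1 - central_quarter n.+2).
Proof.
have := ballot_addS R n.+1 0; rewrite ballot_n0 add0r addn0 => ->.
by rewrite /central_quarter (central_binS n.+1) natrM natrD [4^-1 ^+ n.+2]exprS; field.
Qed.

Lemma ballot_gf1_quarter N : ballot_gf 1 4^-1 N.+1 = 1 - 2 * central_quarter N.+1.
Proof.
rewrite /ballot_gf /series /= big_nat_recl // ballot_small // mul0r add0r.
under eq_bigr do rewrite ballot1_quarter.
rewrite -mulr_sumr (telescope_sumr_eq (fun n => - central_quarter n.+1)) // => [|n _].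
  have -> : central_quarter 1 = 2^-1 by rewrite /central_quarter expr1 bin1 muln1; field.
  by field.
by rewrite opprK addrC.
Qed.

Lemma ballot_gf_quarter_ge0 k N : 0 <= ballot_gf k 4^-1 N.
Proof. by apply: sumr_ge0 => n _; rewrite mulr_ge0 ?ballot_ge0 ?exprn_ge0 ?invr_ge0. Qed.

Lemma ballot_gf1_quarter_le1 N : ballot_gf 1 4^-1 N <= 1.
Proof.
case: N => [|N]; first by rewrite /ballot_gf /series /= big_geq.
by rewrite ballot_gf1_quarter gerBl mulr_ge0 // mulr_ge0 ?exprn_ge0 ?invr_ge0.
Qed.

Lemma cvg_ballot_gf_quarter_affine {p : R} : ballot_gf 1 4^-1 @ \oo --> p ->
  forall k, ballot_gf k 4^-1 @ \oo --> 1 - k%:R * (1 - p).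
Proof.
move=> gf1_p k.
suff : ballot_gf k 4^-1 @ \oo --> 1 - k%:R * (1 - p) /\
       ballot_gf k.+1 4^-1 @ \oo --> 1 - k.+1%:R * (1 - p) by case.
elim: k => [|k [IHk IHk1]].
  by rewrite mul0r subr0 mul1r opprB subrKC; split; [exact: cvg_ballot_gf0 |].
have quarter_neq0 : 4^-1 != 0 :> R by rewrite invr_eq0 pnatr_eq0.
split=> //; apply: cvg_trans (cvg_ballot_gfSS quarter_neq0 IHk IHk1) _.
rewrite invrK -[k.+2]addn2 -[k.+1]addn1 !natrD.
by rewrite (_ : _ - _ - _ = 1 - (k%:R + 2) * (1 - p)) //; ring.
Qed.

Lemma cvg_ballot_gf_quarter k : ballot_gf k 4^-1 @ \oo --> (1 : R).
Proof.
have gf1_cvg : cvgn (ballot_gf 1 4^-1).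
  apply: nondecreasing_is_cvgn; last by exists 1 => _ [N _ <-]; exact: ballot_gf1_quarter_le1.
  by apply: nondecreasing_series => n _ _; rewrite mulr_ge0 ?ballot_ge0 ?exprn_ge0 ?invr_ge0.
have affine := cvg_ballot_gf_quarter_affine gf1_cvg.
suff lim1 : limn (ballot_gf 1 4^-1) = 1.
  by have := affine k; rewrite lim1 subrr mulr0 subr0.
have lim_le1 : limn (ballot_gf 1 4^-1) <= 1.
  by apply: limr_le gf1_cvg _; apply: nearW; exact: ballot_gf1_quarter_le1.
apply/eqP; rewrite eq_le lim_le1 /= -subr_le0; apply: bounded_multiples_le0 => j.
rewrite -subr_ge0; apply: ler_cvg_to (cvg_cst 0) (affine j) _.
by apply: nearW; exact: ballot_gf_quarter_ge0.
Qed.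

Lemma cvgn_ballot_gf_neg_quarter k : cvgn (ballot_gf k (- 4^-1)).
Proof.
apply: normed_cvg; rewrite normed_ballot_gf normrN ger0_norm ?invr_ge0 //.
exact: cvgP (cvg_ballot_gf_quarter k).
Qed.

Lemma norm_lim_ballot_gf_neg_quarter k : `|limn (ballot_gf k (- 4^-1))| <= 1.
Proof.
have := lim_series_norm (f := fun n => ballot R n k * (- 4^-1) ^+ n).
rewrite normed_ballot_gf normrN ger0_norm ?invr_ge0 // (cvg_lim _ (cvg_ballot_gf_quarter k)) //.
by apply; exact: cvg_ballot_gf_quarter.
Qed.

Lemma cvg_ballot_gf_neg_quarter k :
  ballot_gf k (- 4^-1) @ \oo --> (2 * Num.sqrt 2 - 3) ^+ k.
Proof.
pose L j := limn (ballot_gf j (- 4^-1)).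
have s2 : Num.sqrt 2 ^+ 2 = 2 :> R by rewrite sqr_sqrtr.
have s_ge0 : 0 <= Num.sqrt 2 :> R by exact: sqrtr_ge0.
have L0 : limn (ballot_gf 0 (- 4^-1)) = 1 by exact: cvg_lim (cvg_ballot_gf0 _).
have uv : (2 * Num.sqrt 2 - 3) * (- 3 - 2 * Num.sqrt 2) = 1 :> R by lra.
have LSS j : L j.+2 = (2 * Num.sqrt 2 - 3 + (- 3 - 2 * Num.sqrt 2)) * L j.+1
                    - (2 * Num.sqrt 2 - 3) * (- 3 - 2 * Num.sqrt 2) * L j.
  have neg_quarter_neq0 : - 4^-1 != 0 :> R by rewrite oppr_eq0 invr_eq0 pnatr_eq0.
  rewrite /L (cvg_lim _ (cvg_ballot_gfSS neg_quarter_neq0 (cvgn_ballot_gf_neg_quarter j)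
                                      (cvgn_ballot_gf_neg_quarter j.+1))) //.
  by rewrite invrN invrK uv; ring.
have v_gt1 : 1 < `|- 3 - 2 * Num.sqrt 2 : R| by rewrite ltr0_norm; lra.
have := bounded_linrec_geometric v_gt1 norm_lim_ballot_gf_neg_quarter LSS k.
by rewrite L0 mul1r => <-; exact: cvgn_ballot_gf_neg_quarter.
Qed.

End GeneratingFunction.

Section CatalanSums.
Context {R : realType}.

Lemma psum_eq_series m (f g : R ^nat) :
  (forall n, (n < m)%N -> g n = 0) -> (forall n, (m <= n)%N -> f n = g n) ->
  psum m f = series g.
Proof.
move=> g0 fg; apply/funext => N; rewrite /psum /series /=.
have [le_mN | lt_Nm] := leqP m N.
  rewrite [RHS](big_cat_nat (leq0n m) le_mN) /= [X in _ = X + _]big1_seq ?add0r.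
    by apply: eq_big_nat => n /andP[le_mn _]; exact: fg.
  by move=> n; rewrite mem_index_iota => /andP[_ /g0].
rewrite big_geq ?(ltnW lt_Nm) // big1_seq // => n.
by rewrite mem_index_iota => /andP[_ lt_nN]; exact/g0/(ltn_trans lt_nN).
Qed.

Lemma psum_catalanB k (x : R) : (1 <= k)%N ->
  psum k (fun n => catalanB R n k * x ^+ n) = ballot_gf R k x.
Proof.
move=> k_gt0; apply: psum_eq_series => n le_n; last by rewrite catalanB_ballot ?k_gt0.
by rewrite ballot_small ?mul0r.
Qed.

Lemma psum_catalanA k (x : R) :
  psum k (fun n => catalanA R n k.+1 * x ^+ n) = ballot_gf R k x + ballot_gf R k.+1 x.
Proof.
rewrite -seriesD; apply: psum_eq_series => n le_n; rewrite fctE.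
  by rewrite !ballot_small ?mul0r ?addr0 // ltnW.
by rewrite catalanA_ballot // mulrDl.
Qed.

Lemma cvg_catalanB_quarter k : (1 <= k)%N ->
  psum k (fun n => catalanB R n k / 4 ^+ n) @ \oo --> (1 : R).
Proof.
move=> k_gt0; under [X in psum _ X]funext => n do rewrite -exprVn.
by rewrite psum_catalanB //; exact: cvg_ballot_gf_quarter.
Qed.

Lemma cvg_catalanB_neg_quarter k : (1 <= k)%N ->
  psum k (fun n => catalanB R n k * ((-1) ^+ n / 4 ^+ n)) @ \oo
    --> (2 * Num.sqrt 2 - 3) ^+ k.
Proof.
move=> k_gt0; under [X in psum _ X]funext => n do rewrite -exprVn -exprMn mulN1r.
by rewrite psum_catalanB //; exact: cvg_ballot_gf_neg_quarter.
Qed.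

Lemma cvg_catalanA_quarter k :
  psum k (fun n => catalanA R n k.+1 / 4 ^+ n) @ \oo --> (2 : R).
Proof.
under [X in psum _ X]funext => n do rewrite -exprVn.
rewrite psum_catalanA (_ : 2 = 1 + 1) //.
by apply: cvgD; exact: cvg_ballot_gf_quarter.
Qed.

Lemma cvg_catalanA_neg_quarter k :
  psum k (fun n => catalanA R n k.+1 * ((-1) ^+ n / 4 ^+ n)) @ \oo
    --> 2 * (Num.sqrt 2 - 1) * (2 * Num.sqrt 2 - 3) ^+ k.
Proof.
under [X in psum _ X]funext => n do rewrite -exprVn -exprMn mulN1r.
have -> : 2 * (Num.sqrt 2 - 1) * (2 * Num.sqrt 2 - 3) ^+ k =
          (2 * Num.sqrt 2 - 3) ^+ k + (2 * Num.sqrt 2 - 3) ^+ k.+1 :> R.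
  by rewrite exprS; ring.
by rewrite psum_catalanA; apply: cvgD; exact: cvg_ballot_gf_neg_quarter.
Qed.

Lemma cvg_psum_geometric m (a q : R) : `|q| < 1 ->
  psum m (fun k => a * q ^+ k) @ \oo --> a * q ^+ m / (1 - q).
Proof.
move=> q_lt1; rewrite -(cvg_shiftn m).
have -> : [sequence psum m (fun k => a * q ^+ k) (n + m)]_n = series (geometric (a * q ^+ m) q).
  apply/funext => n; rewrite /psum /series /= (big_addn 0 _ m) addnK.
  by apply: eq_bigr => i _; rewrite addnC exprD mulrA.
exact: cvg_geometric_series.
Qed.

Lemma tsum_mulr {k : nat} {f : R ^nat} {l : R} (c : R) : psum k f @ \oo --> l ->
  tsum k (fun n => f n * c) = l * c.
Proof.
move=> f_l; apply: cvg_lim => //.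
have -> : psum k (fun n => f n * c) = (fun N => psum k f N * c).
  by apply/funext => N; rewrite /psum mulr_suml.
exact: cvgMr_tmp.
Qed.

Lemma cvg_psum_tsum_geometric {m : nat} {F G : nat -> R ^nat} {a z w l : R} :
  `|z * w| < 1 -> l * (1 - z * w) = a * (z * w) ^+ m ->
  (forall k n, G k n = F k n * w ^+ k) ->
  (forall k, (m <= k)%N -> psum k (F k) @ \oo --> a * z ^+ k) ->
  psum m (fun k => tsum k (G k)) @ \oo --> l.
Proof.
move=> zw_lt1 l_sum GE F_cvg.
have zw_neq1 : 1 - z * w != 0.
  by rewrite subr_eq0; apply: contraTneq zw_lt1 => <-; rewrite normr1 ltxx.
have -> : psum m (fun k => tsum k (G k)) = psum m (fun k => a * (z * w) ^+ k).
  apply/funext => N; apply: eq_big_nat => k /andP[le_mk _].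
  by rewrite (funext (GE k)) (tsum_mulr _ (F_cvg k le_mk)) exprMn mulrA.
by rewrite -(mulfK zw_neq1 l) l_sum; exact: cvg_psum_geometric.
Qed.

End CatalanSums.

Theorem lemma2p2 (R : realType) :
  (forall k : nat, (1 <= k)%N ->
     [/\ psum k (fun n => catalanB R n k / 4 ^+ n) @ \oo --> (1 : R),
         psum k (fun n => catalanB R n k * ((-1) ^+ n / 4 ^+ n)) @ \oo
           --> ((2 * Num.sqrt 2 - 3) ^+ k : R),
         psum k (fun n => catalanA R n k.+1 / 4 ^+ n) @ \oo --> (2 : R) &
         psum k (fun n => catalanA R n k.+1 * ((-1) ^+ n / 4 ^+ n)) @ \oo
           --> (2 * (Num.sqrt 2 - 1) * (2 * Num.sqrt 2 - 3) ^+ k : R)]) /\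
  [/\ psum 1 (fun k => tsum k (fun n => catalanB R n k / 4 ^+ (n + k))) @ \oo
        --> (3^-1 : R),
      psum 1 (fun k => tsum k (fun n => catalanB R n k * ((-1) ^+ n / 4 ^+ (n + k))))
        @ \oo --> ((8 * Num.sqrt 2 - 13) / 41 : R),
      psum 0 (fun k => tsum k (fun n => catalanA R n k.+1 / 4 ^+ (n + k))) @ \oo
        --> (8 / 3 : R) &
      psum 0 (fun k => tsum k (fun n => catalanA R n k.+1 * ((-1) ^+ n / 4 ^+ (n + k))))
        @ \oo --> (8 / 41 * (5 * Num.sqrt 2 - 3) : R)].
Proof.
have quarter_shift (c : R) n k : c / 4 ^+ (n + k) = c / 4 ^+ n * 4^-1 ^+ k.
  by rewrite exprD invfM mulrA exprVn.
have neg_quarter_shift (c : R) n k :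
    c * ((-1) ^+ n / 4 ^+ (n + k)) = c * ((-1) ^+ n / 4 ^+ n) * 4^-1 ^+ k.
  by rewrite quarter_shift mulrA.
have s2 : Num.sqrt 2 ^+ 2 = 2 :> R by rewrite sqr_sqrtr.
have s_ge0 : 0 <= Num.sqrt 2 :> R by exact: sqrtr_ge0.
have quarter_lt1 : `|1 * 4^-1| < 1 :> R by rewrite mul1r ger0_norm ?invr_ge0 ?invf_lt1 ?ltr1n.
have u_quarter_lt1 : `|(2 * Num.sqrt 2 - 3) * 4^-1| < 1 :> R.
  by rewrite ltr_norml; apply/andP; split; nra.
split=> [k k_gt0|]; first by split; [exact: cvg_catalanB_quarter | exact: cvg_catalanB_neg_quarter
  | exact: cvg_catalanA_quarter | exact: cvg_catalanA_neg_quarter].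
split.
- apply: (cvg_psum_tsum_geometric (a := 1) (z := 1) quarter_lt1 _ (fun k n => quarter_shift _ n k)).
    by rewrite expr1; field.
  by move=> k k_gt0; rewrite expr1n mulr1; exact: cvg_catalanB_quarter.
- apply: (cvg_psum_tsum_geometric (a := 1) u_quarter_lt1 _ (fun k n => neg_quarter_shift _ n k)).
    by rewrite expr1; lra.
  by move=> k k_gt0; rewrite mul1r; exact: cvg_catalanB_neg_quarter.
- apply: (cvg_psum_tsum_geometric (a := 2) (z := 1) quarter_lt1 _ (fun k n => quarter_shift _ n k)).
    by rewrite expr0; field.
  by move=> k _; rewrite expr1n mulr1; exact: cvg_catalanA_quarter.
- apply: (cvg_psum_tsum_geometric (a := 2 * (Num.sqrt 2 - 1)) u_quarter_lt1 _
           (fun k n => neg_quarter_shift _ n k)).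
    by rewrite expr0; lra.
  by move=> k _; exact: cvg_catalanA_neg_quarter.
Qed.
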